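(* Consider the admission control model described in the context, with discount rate $\alpha>0$, and suppose: (i) $0\le \Delta d_{i+1}\le \Delta d_i$ for $1\le i\le n-1$, and $\Delta d_1>0$; (ii) $\Delta h_{i+1}\ge \Delta h_i\ge 0$ for $1\le i\le n-1$. Define $\nu_0=\Delta h_1/(\alpha+\Delta d_1)$ and, for $1\le j\le n-1$, $$\nu_j=\nu_{j-1}+\frac{\Delta h_{j+1}-\nu_{j-1}(\alpha+\Delta d_{j+1})}{\alpha+\Delta d_{j+1}+w^{S_{j+1}}_{j-1}/\rho_{j-1}}.$$ Then: (a) $\dfrac{\Delta h_j}{\alpha+\Delta d_j}\le \dfrac{\Delta h_{j+1}}{\alpha+\Delta d_{j+1}}$ for $1\le j\le n-1$; (b) $\nu_j\le \dfrac{\Delta h_{j+1}}{\alpha+\Delta d_{j+1}}$ for $0\le j\le n-1$; (c) $\nu_0\le\nu_1\le\cdots\le\nu_{n-1}$.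
   Context: Admission control model: a single-server queue whose number in system $L(t)\in\{0,1,\dots,n\}$ ($n\ge1$) evolves in continuous time; in state $i$ arrivals occur at rate $\lambda_i>0$ and services at rate $\mu_i>0$ ($1\le i\le n$), $\mu_0=0$. At each time the entry gate is shut ($a=1$, arrivals rejected) or open ($a=0$, arrivals admitted); in state $n$ it is always shut. Holding costs accrue at rate $h_i$ in state $i$; discount rate $\alpha>0$. For $S\subseteq\{0,\dots,n-1\}$, the $S$-active policy shuts the gate exactly in states $S\cup\{n\}$; $b^S_i=E_i[\int_0^\infty\lambda_{L(t)}a(t)e^{-\alpha t}dt]$ under it, starting from $i$. Marginal workloads: $w^S_i=\lambda_i[1-(b^S_{i+1}-b^S_i)]$, $0\le i\le n-1$. $S_k=\{k-1,\dots,n-1\}$ for $1\le k\le n$. Notation: $\Delta x_i=x_i-x_{i-1}$; $d_i=\mu_i-\lambda_i$ ($d_0=-\lambda_0$); $\rho_i=\lambda_i/\mu_{i+1}$. *)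

From HB Require Import structures.
From mathcomp Require Import all_boot all_order all_algebra.
Set Implicit Arguments. Unset Strict Implicit. Unset Printing Implicit Defensive.
Import Order.TTheory GRing.Theory Num.Theory.
Local Open Scope ring_scope.

Section AdmissionControl.
Variable R : realFieldType.
(* number of states is n+1 : {0,...,n} *)
Variable n : nat.
Variables (lam mu h : nat -> R).
Variable alpha : R.

Definition muz (i : nat) : R := if i == 0%N then 0 else mu i.

Definition dd (i : nat) : R := muz i - lam i.
Definition Dd (i : nat) : R := dd i - dd i.-1.
Definition Dh (i : nat) : R := h i - h i.-1.
Definition rho (i : nat) : R := lam i / mu i.+1.

(* a set S of states in {0,...,n-1} given as a boolean predicate on nat;
   the S-active policy shuts the gate exactly on S \cup {n} *)
Definition gate (S : pred nat) (i : nat) : R := ((S i && (i < n)%N) || (i == n))%:R.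

(* generator of the controlled birth-death chain on {0..n} under the
   S-active policy *)
Definition genQ (S : pred nat) : 'M[R]_n.+1 :=
  \matrix_(i, j)
    (if (j : nat) == (i : nat).+1 then lam i * (1 - gate S i)
     else if (j : nat).+1 == i then muz i
     else if (j : nat) == i then - (lam i * (1 - gate S i) + muz i)
     else 0).

Definition rew (S : pred nat) : 'cV[R]_n.+1 := \col_i (lam i * gate S i).

(* b^S_i = E_i[ int_0^oo lambda_{L(t)} a(t) e^{-alpha t} dt ]
        = ((alpha I - Q)^{-1} r)_i  (resolvent of the finite CTMC) *)
Definition bS (S : pred nat) (i : nat) : R :=
  (invmx (alpha%:M - genQ S) *m rew S) (inord i) 0.

Definition wS (S : pred nat) (i : nat) : R := lam i * (1 - (bS S i.+1 - bS S i)).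

Definition Sk (k : nat) : pred nat := fun i => (k.-1 <= i)%N && (i <= n.-1)%N.

Fixpoint nu (j : nat) : R :=
  match j with
  | 0 => Dh 1 / (alpha + Dd 1)
  | j'.+1 => nu j' + (Dh j.+1 - nu j' * (alpha + Dd j.+1))
                     / (alpha + Dd j.+1 + wS (Sk j.+1) j' / rho j')
  end.

End AdmissionControl.

From HB Require Import structures.
From mathcomp Require Import all_boot all_order all_algebra.
From mathcomp Require Import ring lra zify.
Set Implicit Arguments. Unset Strict Implicit. Unset Printing Implicit Defensive.
Import Order.TTheory GRing.Theory Num.Theory.
Local Open Scope ring_scope.

(* Part (a) holds because the numerators [Dh] grow while the positive
   denominators [alpha + Dd] shrink.  Each [nu_j] is obtained from [nu_(j-1)] by
   moving it towards [Dh_(j+1) / (alpha + Dd_(j+1))] by the fraction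
   [(alpha + Dd_(j+1)) / (alpha + Dd_(j+1) + w / rho)] of the way, which lies in
   (0, 1] as soon as [w = w^(S_(j+1))_(j-1) >= 0]; since by (a) and induction
   [nu_(j-1)] lies below the new target, (b) and (c) follow.
   The sign of [w] means [b_j - b_(j-1) <= 1] for the [S_(j+1)]-active policy.
   This is a discrete maximum principle: the increments [e_k = b_k - b_(k-1)],
   [1 <= k <= j], solve [(alpha + Dd_k) e_k = lam_k (e_(k+1) - e_k)
   + mu_(k-1) (e_(k-1) - e_k)] with boundary value [e_(j+1) = 1], so they cannot
   exceed 1.  The same principle makes [alpha I - Q] invertible, so that [b^S]
   really is the resolvent. *)

Section MaximumPrinciple.
Variable R : realDomainType.

Lemma exists_argmax_nat (x : nat -> R) (a b : nat) : (a <= b)%N ->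
  exists2 k, (a <= k <= b)%N & forall i, (a <= i <= b)%N -> x i <= x k.
Proof.
elim: b => [|b IH] ab.
  by exists a => [|i ia]; [rewrite ab leqnn | have -> : i = a by lia].
have [ba|ab'] := leqP a b; last first.
  exists b.+1 => [|i iab]; first by rewrite ab leqnn.
  by have -> : i = b.+1 by lia.
have [k kab kmax] := IH ba.
have [xk|xb] := lerP (x k) (x b.+1).
  exists b.+1 => [|i iab]; first by rewrite ab leqnn.
  have [->//|ib] := eqVneq i b.+1.
  by apply: le_trans xk; apply: kmax; lia.
exists k => [|i iab]; first by lia.
have [->|ib] := eqVneq i b.+1; first exact: ltW.
by apply: kmax; lia.
Qed.

Lemma max_principle (a b : nat) (B : R) (x c L M : nat -> R) :
  0 <= B ->
  (forall k, (a <= k <= b)%N -> 0 < c k) ->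
  (forall k, (a <= k <= b)%N -> 0 <= L k) ->
  (forall k, (a <= k <= b)%N -> 0 <= M k) ->
  (forall k, (a <= k <= b)%N ->
     c k * x k <= L k * (x k.+1 - x k) + M k * (x k.-1 - x k)) ->
  M a = 0 \/ x a.-1 <= B -> L b = 0 \/ x b.+1 <= B ->
  forall k, (a <= k <= b)%N -> x k <= B.
Proof.
move=> B_ge0 c_gt0 L_ge0 M_ge0 balance left right.
have [ab|] := leqP a b; last by move=> ba k; lia.
have [k kab kmax] := exists_argmax_nat x ab.
move=> i iab; apply: le_trans (kmax i iab) _; rewrite leNgt; apply/negP => xk_gtB.
have up : L k * (x k.+1 - x k) <= 0.
  have [kb|kb] := ltnP k b.
    by rewrite mulr_ge0_le0 ?L_ge0 // subr_le0 kmax //; lia.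
  have {}kb : b = k by lia.
  move: right; rewrite kb => -[->|xk1]; first by rewrite mul0r.
  by rewrite mulr_ge0_le0 ?L_ge0 // subr_le0 (le_trans xk1) // ltW.
have down : M k * (x k.-1 - x k) <= 0.
  have [ak|ak] := ltnP a k.
    by rewrite mulr_ge0_le0 ?M_ge0 // subr_le0 kmax //; lia.
  have {}ak : a = k by lia.
  move: left; rewrite ak => -[->|xk1]; first by rewrite mul0r.
  by rewrite mulr_ge0_le0 ?M_ge0 // subr_le0 (le_trans xk1) // ltW.
have : 0 < c k * x k by rewrite mulr_gt0 ?c_gt0 // (le_lt_trans B_ge0).
have := balance k kab; lra.
Qed.

End MaximumPrinciple.

Section Resolvent.
Variables (R : realFieldType) (n : nat) (lam mu : nat -> R) (alpha : R).

Definition adm_rate (S : pred nat) (i : nat) : R := lam i * (1 - gate R n S i).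

Lemma adm_rate_n S : adm_rate S n = 0.
Proof. by rewrite /adm_rate /gate eqxx orbT subrr mulr0. Qed.

(* For [i = n] the index [inord i.+1] is junk, harmless as [adm_rate S n = 0]. *)
Lemma genQ_mulmx S (c : 'cV[R]_n.+1) (i : 'I_n.+1) :
  (genQ n lam mu S *m c) i 0 =
  adm_rate S i * (c (inord i.+1) 0 - c i 0) + muz mu i * (c (inord i.-1) 0 - c i 0).
Proof.
pose x k := c (inord k) 0.
have entry (j : 'I_n.+1) : genQ n lam mu S i j * c j 0 =
    (if (j : nat) == i.+1 then adm_rate S i * x j else 0)
  + (if (j : nat) == i.-1 then muz mu i * x j else 0)
  - (if (j : nat) == i then (adm_rate S i + muz mu i) * x j else 0).
  rewrite mxE /x inord_val -/(adm_rate S i).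
  have muz0 : i = 0%N :> nat -> muz mu i = 0 by rewrite /muz => ->.
  case: (j =P i.+1 :> nat) => [?|?]; case: (j.+1 =P i :> nat) => [?|?];
    case: (j =P i.-1 :> nat) => [?|?]; case: (j =P i :> nat) => [?|?];
    try lia; try (rewrite muz0; last lia); ring.
rewrite !mxE; under eq_bigr => j _ do rewrite entry.
rewrite sumrB big_split /= -!(big_mkcond (fun j : 'I_n.+1 => (j : nat) == _)).
rewrite !(big_ord1_eq _ (fun k => _ * x k)) ltnS ltn_ord (leq_ltn_trans (leq_pred _)) //.
rewrite /x inord_val; case: ltnP => [_|ni]; first by ring.
have -> : (i : nat) = n by have := ltn_ord i; lia.
by rewrite adm_rate_n; ring.
Qed.

Lemma resolvent_mulmx S (c : 'cV[R]_n.+1) (i : 'I_n.+1) :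
  ((alpha%:M - genQ n lam mu S) *m c) i 0 = alpha * c i 0
    - (adm_rate S i * (c (inord i.+1) 0 - c i 0) + muz mu i * (c (inord i.-1) 0 - c i 0)).
Proof. by rewrite mulmxBl mul_scalar_mx 3!mxE genQ_mulmx. Qed.

Hypothesis lam_gt0 : forall i, (i <= n)%N -> 0 < lam i.
Hypothesis mu_gt0 : forall i, (1 <= i <= n)%N -> 0 < mu i.
Hypothesis alpha_gt0 : 0 < alpha.

Local Notation b := (bS n lam mu alpha).

Lemma muz_ge0 i : (i <= n)%N -> 0 <= muz mu i.
Proof.
move=> i_le_n; rewrite /muz; case: eqP => [//|/eqP i_neq0].
by rewrite ltW // mu_gt0 // lt0n i_neq0.
Qed.

Lemma adm_rate_ge0 S i : (i <= n)%N -> 0 <= adm_rate S i.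
Proof.
move=> i_le_n; apply: mulr_ge0; first exact: ltW (lam_gt0 i_le_n).
by rewrite /gate subr_ge0 (ler_nat R _ 1) leq_b1.
Qed.

Lemma resolvent_ker_le0 S (c : 'cV[R]_n.+1) :
  (alpha%:M - genQ n lam mu S) *m c = 0 -> forall i, c i 0 <= 0.
Proof.
move=> kerc i.
have balance k : (0 <= k <= n)%N -> alpha * c (inord k) 0 <=
    adm_rate S k * (c (inord k.+1) 0 - c (inord k) 0)
  + muz mu k * (c (inord k.-1) 0 - c (inord k) 0).
  move=> k_le_n; have := congr1 (fun M : 'cV[R]_n.+1 => M (inord k) 0) kerc.
  by rewrite resolvent_mulmx mxE inordK //; lra.
have := max_principle (x := fun k => c (inord k) 0) (c := fun=> alpha)
  (lexx 0) (fun _ _ => alpha_gt0) (fun k kn => adm_rate_ge0 S (proj2 (andP kn)))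
  (fun k kn => muz_ge0 (proj2 (andP kn))) balance (or_introl (erefl _))
  (or_introl (adm_rate_n S)).
by move/(_ i); rewrite inord_val; apply; rewrite leq0n -ltnS ltn_ord.
Qed.

Lemma resolvent_unitmx S : alpha%:M - genQ n lam mu S \in unitmx.
Proof.
rewrite -unitmx_tr unitmxE unitfE; apply/negP => /det0P[v v_neq0 vA0].
have kerv : (alpha%:M - genQ n lam mu S) *m v^T = 0.
  by apply: trmx_inj; rewrite trmx_mul trmxK vA0 trmx0.
have kervN : (alpha%:M - genQ n lam mu S) *m - v^T = 0 by rewrite mulmxN kerv oppr0.
move/eqP: v_neq0; apply; apply/matrixP => a j; rewrite (ord1 a) mxE.
have := resolvent_ker_le0 kerv j; have := resolvent_ker_le0 kervN j.
by rewrite !mxE; lra.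
Qed.

Lemma bS_balance S i : (i <= n)%N ->
  alpha * b S i = lam i * gate R n S i
    + adm_rate S i * (b S i.+1 - b S i) + muz mu i * (b S i.-1 - b S i).
Proof.
move=> i_le_n; rewrite /bS; set X := invmx _ *m _.
have := congr1 (fun M : 'cV[R]_n.+1 => M (inord i) 0)
  (mulKVmx (resolvent_unitmx S) (rew n lam S)).
by rewrite resolvent_mulmx -/X /rew !mxE inordK //; lra.
Qed.

Lemma gate_Sk_lt m i : (i < m < n)%N -> gate R n (Sk n m.+1) i = 0.
Proof.
move=> /andP[i_lt_m m_lt_n]; rewrite /gate /Sk /= leqNgt i_lt_m /=.
by rewrite ltn_eqF // (ltn_trans i_lt_m).
Qed.

Lemma gate_Sk_eq m : (m < n)%N -> gate R n (Sk n m.+1) m = 1.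
Proof.
move=> m_lt_n; rewrite /gate /Sk /= leqnn m_lt_n.
by have -> : (m <= n.-1)%N by lia.
Qed.

(* The increments of [b^(S_(m+1))], continued by [1] beyond [m]: at the first
   shut state [m] the reward [lam m] plays the role of [lam m * incr_Sk m m.+1]. *)
Definition incr_Sk (m k : nat) : R :=
  if (k <= m)%N then b (Sk n m.+1) k - b (Sk n m.+1) k.-1 else 1.

Lemma bS_Sk_balance m i : (m < n)%N -> (i <= m)%N ->
  alpha * b (Sk n m.+1) i = lam i * incr_Sk m i.+1 - muz mu i * incr_Sk m i.
Proof.
move=> m_lt_n i_le_m.
have := bS_balance (Sk n m.+1) (leq_trans i_le_m (ltnW m_lt_n)).
have [i_lt_m | ->] : (i < m)%N \/ i = m by lia.
  by rewrite /adm_rate gate_Sk_lt ?i_lt_m // /incr_Sk i_lt_m i_le_m => ->; ring.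
by rewrite /adm_rate gate_Sk_eq // /incr_Sk leqnn ltnn => ->; ring.
Qed.

Lemma incr_Sk_balance m k : (m < n)%N -> (1 <= k <= m)%N ->
  (alpha + Dd lam mu k) * incr_Sk m k
  = lam k * (incr_Sk m k.+1 - incr_Sk m k) + muz mu k.-1 * (incr_Sk m k.-1 - incr_Sk m k).
Proof.
move=> m_lt_n /andP[k_ge1 k_le_m].
have bk := bS_Sk_balance m_lt_n k_le_m.
have := bS_Sk_balance m_lt_n (leq_trans (leq_pred k) k_le_m); rewrite prednK //.
have ek : incr_Sk m k = b (Sk n m.+1) k - b (Sk n m.+1) k.-1 by rewrite /incr_Sk k_le_m.
by move: bk; rewrite /Dd /dd ek; lra.
Qed.

Lemma bS_Sk_increment_le1 m : (1 <= m < n)%N ->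
  (forall k, (1 <= k <= m)%N -> 0 < alpha + Dd lam mu k) ->
  b (Sk n m.+1) m - b (Sk n m.+1) m.-1 <= 1.
Proof.
move=> /andP[m_ge1 m_lt_n] den_gt0.
have L_ge0 k : (1 <= k <= m)%N -> 0 <= lam k by move=> km; rewrite ltW ?lam_gt0 //; lia.
have M_ge0 k : (1 <= k <= m)%N -> 0 <= muz mu k.-1 by move=> km; apply: muz_ge0; lia.
have balance k : (1 <= k <= m)%N -> (alpha + Dd lam mu k) * incr_Sk m k <=
    lam k * (incr_Sk m k.+1 - incr_Sk m k) + muz mu k.-1 * (incr_Sk m k.-1 - incr_Sk m k).
  by move=> km; rewrite incr_Sk_balance.
have := max_principle (x := incr_Sk m) ler01 den_gt0 L_ge0 M_ge0 balance
  (or_introl (erefl _)) (or_intror _) (k := m).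
by rewrite /incr_Sk leqnn ltnn m_ge1 lexx; apply.
Qed.

Lemma wS_Sk_ge0 j : (j.+1 < n)%N ->
  (forall k, (1 <= k <= j.+1)%N -> 0 < alpha + Dd lam mu k) ->
  0 <= wS n lam mu alpha (Sk n j.+2) j.
Proof.
move=> j_lt_n den_gt0; apply: mulr_ge0; first by rewrite ltW // lam_gt0 //; lia.
by rewrite subr_ge0; apply: bS_Sk_increment_le1; rewrite ?j_lt_n.
Qed.

End Resolvent.

Lemma ler_div_num_den (R : numFieldType) (x1 x2 y1 y2 : R) :
  0 <= x1 <= x2 -> 0 < y2 <= y1 -> x1 / y1 <= x2 / y2.
Proof.
move=> /andP[x1_ge0 x12] /andP[y2_gt0 y21].
have y1_gt0 := lt_le_trans y2_gt0 y21.
apply: ler_pM => //; first by rewrite invr_ge0 ltW.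
by rewrite lef_pV2 ?posrE.
Qed.

Lemma relaxation_step (R : realFieldType) (x D c W : R) :
  0 < c -> 0 <= W -> x <= D / c ->
  x <= x + (D - x * c) / (c + W) <= D / c.
Proof.
move=> c_gt0 W_ge0 x_le.
have gap_ge0 : 0 <= D - x * c by rewrite subr_ge0 -ler_pdivlMr.
have cW_gt0 : 0 < c + W by rewrite ltr_wpDr.
apply/andP; split; first by rewrite lerDl divr_ge0 // ltW.
have -> : D / c = x + (D - x * c) / c by field; rewrite gt_eqF.
by rewrite lerD2l ler_wpM2l // lef_pV2 ?posrE // lerDl.
Qed.

Theorem lemma7 (R : realFieldType) (n : nat) (lam mu h : nat -> R) (alpha : R)
  (hn : (1 <= n)%N)
  (hlam : forall i, (i <= n)%N -> 0 < lam i)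
  (hmu : forall i, (1 <= i <= n)%N -> 0 < mu i)
  (halpha : 0 < alpha)
  (hd : forall i, (1 <= i <= n.-1)%N ->
          0 <= Dd lam mu i.+1 /\ Dd lam mu i.+1 <= Dd lam mu i)
  (hd1 : 0 < Dd lam mu 1)
  (hh : forall i, (1 <= i <= n.-1)%N -> 0 <= Dh h i /\ Dh h i <= Dh h i.+1) :
  (forall j, (1 <= j <= n.-1)%N ->
     Dh h j / (alpha + Dd lam mu j) <= Dh h j.+1 / (alpha + Dd lam mu j.+1))
  /\ (forall j, (j <= n.-1)%N ->
     nu n lam mu h alpha j <= Dh h j.+1 / (alpha + Dd lam mu j.+1))
  /\ (forall j, (j.+1 <= n.-1)%N ->
     nu n lam mu h alpha j <= nu n lam mu h alpha j.+1).
Proof.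
have Dd_ge0 k : (1 <= k <= n)%N -> 0 <= Dd lam mu k.
  move=> kn; have [->|k_neq1] := eqVneq k 1%N; first exact: ltW.
  by have := (hd k.-1 ltac:(lia)).1; rewrite prednK //; lia.
have den_gt0 k : (1 <= k <= n)%N -> 0 < alpha + Dd lam mu k.
  by move=> kn; have := Dd_ge0 k kn; lra.
have target_mono j : (1 <= j <= n.-1)%N ->
    Dh h j / (alpha + Dd lam mu j) <= Dh h j.+1 / (alpha + Dd lam mu j.+1).
  move=> jn; have [Dh_ge0 Dh_le] := hh j jn; have [_ Dd_le] := hd j jn.
  by apply: ler_div_num_den; rewrite ?Dh_ge0 ?Dh_le ?den_gt0 ?lerD2l ?Dd_le //; lia.
have W_ge0 j : (j.+1 <= n.-1)%N ->
    0 <= wS n lam mu alpha (Sk n j.+2) j / rho lam mu j.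
  move=> jn; apply: divr_ge0.
    by apply: (wS_Sk_ge0 hlam hmu halpha) => [|k kn]; [lia | apply: den_gt0; lia].
  by rewrite divr_ge0 // ltW ?hlam ?hmu //; lia.
have nu_step j : (j.+1 <= n.-1)%N ->
    nu n lam mu h alpha j <= Dh h j.+1 / (alpha + Dd lam mu j.+1) ->
    nu n lam mu h alpha j <= nu n lam mu h alpha j.+1
      <= Dh h j.+2 / (alpha + Dd lam mu j.+2).
  move=> jn nu_le; apply: relaxation_step; [apply: den_gt0; lia | exact: W_ge0 |].
  by apply: le_trans nu_le (target_mono _ _); lia.
have nu_le_target j : (j <= n.-1)%N ->
    nu n lam mu h alpha j <= Dh h j.+1 / (alpha + Dd lam mu j.+1).
  elim: j => [//|j IH] jn.
  by have /andP[] := nu_step j jn (IH (ltnW jn)).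
split; [exact: target_mono | split; [exact: nu_le_target |]].
by move=> j jn; have /andP[] := nu_step j jn (nu_le_target j (ltnW jn)).
Qed.
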